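(* Let $\Sigma$ be a finite alphabet with $|\Sigma| \geq 8$. Then $\mathrm{Aut}(\Sigma^\mathbb{N})$ does not satisfy the Tits alternative.
   Context: $\Sigma^\mathbb{N}$ is the one-sided full shift with the product topology and the shift $\sigma(x)_i = x_{i+1}$. $\mathrm{Aut}(\Sigma^\mathbb{N})$ is the group of homeomorphisms of $\Sigma^\mathbb{N}$ commuting with $\sigma$. A group satisfies the Tits alternative if every finitely generated subgroup is virtually solvable or contains a free group on two generators. *)

From mathcomp Require Import all_boot.
From Stdlib Require List.

Set Implicit Arguments.
Unset Strict Implicit.
Unset Printing Implicit Defensive.

Section OneSidedShift.
Variable Sigma : finType.

Definition point := nat -> Sigma.
Definition map := point -> point.

Definition shift (x : point) : point := fun i => x i.+1.

Definition agree (m : nat) (x y : point) : Prop := forall i, i < m -> x i = y i.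

(* Continuity for the product topology of the discrete alphabet:
   cylinders [x_0..x_(m-1)] form a neighbourhood basis of x. *)
Definition continuous (f : map) : Prop :=
  forall (x : point) (n : nat), exists m : nat,
    forall y : point, agree m x y -> agree n (f x) (f y).

Definition isAut (f : map) : Prop :=
  [/\ continuous f,
      (forall x, f (shift x) = shift (f x)) &
      exists g : map, [/\ continuous g, cancel f g & cancel g f]].

Inductive gen (A : map -> Prop) : map -> Prop :=
| gen_id : gen A id
| gen_base f : A f -> gen A f
| gen_comp f g : gen A f -> gen A g -> gen A (f \o g)
| gen_inv f g : gen A f -> cancel f g -> cancel g f -> gen A g.

Definition fgen (S : list map) : map -> Prop := gen (fun f => List.In f S).

Fixpoint derived (K : map -> Prop) (n : nat) : map -> Prop :=
  match n with
  | 0 => K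
  | n'.+1 => gen (fun c => exists a a' b b',
                   derived K n' a /\ derived K n' b /\
                   cancel a a' /\ cancel a' a /\ cancel b b' /\ cancel b' b /\
                   c = a' \o b' \o a \o b)
  end.

Definition solvable_sg (K : map -> Prop) : Prop :=
  exists n, forall f, derived K n f -> f = id.

Definition is_subgroup (K : map -> Prop) : Prop :=
  [/\ K id,
      (forall f g, K f -> K g -> K (f \o g)) &
      (forall f g, K f -> cancel f g -> cancel g f -> K g)].

(* H is virtually solvable: it has a solvable subgroup of finite index
   (finitely many left cosets r_i K cover H). *)
Definition virt_solvable (H : map -> Prop) : Prop :=
  exists K : map -> Prop,
    [/\ is_subgroup K, (forall f, K f -> H f), solvable_sg K &
        exists reps : list map,
          (forall r, List.In r reps -> H r) /\
          (forall h, H h -> exists r k, [/\ List.In r reps, K k & h = r \o k])].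

(* Words in two letters and their inverses: (which generator, inverted?). *)
Definition letter := (bool * bool)%type.

Fixpoint reduced (w : list letter) : bool :=
  match w with
  | l1 :: ((l2 :: _) as w') =>
      ~~ ((l1.1 == l2.1) && (l1.2 != l2.2)) && reduced w'
  | _ => true
  end.

Definition eval_letter (a a' b b' : map) (l : letter) : map :=
  match l with
  | (false, false) => a
  | (false, true) => a'
  | (true, false) => b
  | (true, true) => b'
  end.

Definition eval_word (a a' b b' : map) (w : list letter) : map :=
  foldr (fun l acc => eval_letter a a' b b' l \o acc) id w.

Definition contains_F2 (H : map -> Prop) : Prop :=
  exists a a' b b',
    H a /\ H b /\ cancel a a' /\ cancel a' a /\ cancel b b' /\ cancel b' b /\
    (forall w : list letter, w <> nil -> reduced w ->
       eval_word a a' b b' w <> id).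

Definition Tits_alternative_Aut : Prop :=
  forall S : list map, (forall f, List.In f S -> isAut f) ->
    virt_solvable (fgen S) \/ contains_F2 (fgen S).

End OneSidedShift.

(* Five symbols of [Sigma] serve as lamps and two others as the bits 0 and 1;
   the shape of a point forgets which lamp sits at each lamp position.  The
   group [H] is generated by a cellular automaton [tau] acting on bits only and
   by the maps applying a 3-cycle of the lamp symbols at the positions whose
   right context satisfies one of two shape conditions.

   Every element of [H] acts on shapes as a power of [tau], so a commutator
   [[a, b]] fixes all shapes and permutes the lamp symbols coordinatewise: hence
   [[a, b]^N = 1] for [N = #|{perm Sigma}|], and [H] has no free subgroup.

   On points made of blocks (lamp, bit, bit), [tau^-1] moves the first marker
   bit 1 one block to the front.  Conjugating by [tau] and taking commutators
   of lamp maps (A5 is perfect) puts into [H] the lamp 3-cycles at infinitely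
   many disjoint contexts "the marker is in block i".  A subgroup of finite
   index then contains, for some i <> j, a 3-cycle at context i composed with
   its inverse at context j; perfectness of A5 again propagates such nontrivial
   elements down the whole derived series, so the subgroup is not solvable. *)

From Pilot Require Import Defs.
From mathcomp Require Import all_boot fingroup perm cyclic zify.
From Stdlib Require Import FunctionalExtensionality ClassicalEpsilon.

Set Implicit Arguments.
Unset Strict Implicit.
Unset Printing Implicit Defensive.

Lemma all_iota_lt (P : pred nat) n : all P (iota 0 n) -> forall m, m < n -> P m.
Proof. by move=> /allP h m hm; apply: h; rewrite mem_iota. Qed.

Lemma pigeonhole_rows m n (R : nat -> nat -> nat -> Prop) :
  (forall i k, k < n -> exists2 p, p < m & R i k p) ->
  exists i j, i != j /\ forall k, k < n -> exists2 p, p < m & R i k p /\ R j k p.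
Proof.
move=> hR.
have hex i k : exists p, k < n -> p < m /\ R i k p.
  case: (ltnP k n) => hk; last by exists 0 => hk'; exfalso; lia.
  by have [p ? ?] := hR i k hk; exists p.
pose pick i k := proj1_sig (constructive_indefinite_description _ (hex i k)).
have pickP i k : k < n -> pick i k < m /\ R i k (pick i k).
  by rewrite /pick; case: constructive_indefinite_description.
pose F (i : 'I_(m.+1 ^ n).+1) : {ffun 'I_n -> 'I_m.+1} := [ffun k : 'I_n => inord (pick i k)].
have /injectivePn [i [j hij hF]] : ~~ injectiveb F.
  by apply/negP => /injectiveP /leq_card; rewrite card_ffun !card_ord ltnn.
exists (val i), (val j); split=> // k hk.
have [hi Ri] := pickP i k hk; have [hj Rj] := pickP j k hk; exists (pick i k) => //.
suff E : pick i k = pick j k by split; last rewrite E.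
have := congr1 (fun f : {ffun 'I_n -> 'I_m.+1} => val (f (Ordinal hk))) hF.
by rewrite /F /= !ffunE /= !inordK //; lia.
Qed.

Section LampGroup.
Variable Sigma : finType.
Variable x0 : Sigma.
Hypothesis card_Sigma : 8 <= #|Sigma|.

Local Notation selfmap := (Defs.map Sigma).

(** * Lamps, bits and shapes *)

Definition sym k := nth x0 (enum Sigma) k.
Definition sym_index s := index s (enum Sigma).

Lemma sym_indexK k : k < #|Sigma| -> sym_index (sym k) = k.
Proof. by move=> hk; rewrite /sym_index /sym index_uniq ?enum_uniq // -cardE. Qed.

Lemma symK s : sym (sym_index s) = s.
Proof. by rewrite /sym /sym_index nth_index // mem_enum. Qed.

Lemma eq_sym_small a b : a < 8 -> b < 8 -> (sym a == sym b) = (a == b).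
Proof.
move=> ha hb; apply/eqP/eqP => [h|->] //.
by rewrite -(@sym_indexK a) 1?h ?sym_indexK //; lia.
Qed.

Definition is_lamp s := sym_index s < 5.
Definition shape s : option Sigma := if is_lamp s then None else Some s.
Definition same_shape (x y : point Sigma) := forall j, shape (x j) = shape (y j).

Lemma is_lamp_sym k : k < 8 -> is_lamp (sym k) = (k < 5).
Proof. by move=> hk; rewrite /is_lamp sym_indexK //; lia. Qed.

Lemma same_shape_refl x : same_shape x x. Proof. by []. Qed.
Lemma same_shape_sym x y : same_shape x y -> same_shape y x. Proof. by move=> h j. Qed.
Lemma same_shape_trans x y z : same_shape x y -> same_shape y z -> same_shape x z.
Proof. by move=> h h' j; rewrite h. Qed.

Lemma shape_is_lamp a b : shape a = shape b -> is_lamp a = is_lamp b.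
Proof. by rewrite /shape; case: (is_lamp a); case: (is_lamp b). Qed.

Lemma shape_eq_nonlamp a b s : shape a = shape b -> ~~ is_lamp s -> (a == s) = (b == s).
Proof.
rewrite /shape => h /negbTE hs.
case ha: (is_lamp a); case hb: (is_lamp b); rewrite ha hb in h => //.
- by apply/eqP/eqP => h'; subst; rewrite hs in ha hb.
- by case: h => ->.
Qed.

Lemma shape_nonlamp_eq a b : shape a = shape b -> is_lamp a = false -> a = b.
Proof. by rewrite /shape => h ha; move: h; rewrite ha; case: (is_lamp b) => // -[]. Qed.

Lemma same_shape_nonlamp x y i : same_shape x y -> is_lamp (y i) = false -> x i = y i.
Proof. by move=> h hy; apply: shape_nonlamp_eq (h i) _; rewrite (shape_is_lamp (h i)). Qed.

Definition bit0 := sym 5.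
Definition bit1 := sym 6.

Lemma bit0_nonlamp : ~~ is_lamp bit0. Proof. by rewrite is_lamp_sym. Qed.
Lemma bit1_nonlamp : ~~ is_lamp bit1. Proof. by rewrite is_lamp_sym. Qed.
Lemma bit0_neq1 : (bit0 == bit1) = false. Proof. by rewrite eq_sym_small. Qed.

Definition is_bit s := (s == bit0) || (s == bit1).
Definition flip s := if s == bit0 then bit1 else if s == bit1 then bit0 else s.

Lemma is_bit_nonlamp s : is_bit s -> ~~ is_lamp s.
Proof. by case/orP => /eqP ->; rewrite ?bit0_nonlamp ?bit1_nonlamp. Qed.

Lemma flip0 : flip bit0 = bit1. Proof. by rewrite /flip eqxx. Qed.

Lemma flip_cases s :
  [\/ s = bit0 /\ flip s = bit1, s = bit1 /\ flip s = bit0 | ~~ is_bit s /\ flip s = s].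
Proof.
rewrite /flip /is_bit.
have [->|h0] := eqVneq s bit0; first by constructor 1.
have [->|h1] := eqVneq s bit1; first by constructor 2.
by constructor 3.
Qed.

Lemma is_lamp_flip s : is_lamp (flip s) = is_lamp s.
Proof.
by case: (flip_cases s) => [[-> ->]|[-> ->]|[_ ->]];
  rewrite ?(negbTE bit0_nonlamp) ?(negbTE bit1_nonlamp).
Qed.

Lemma is_bit_flip s : is_bit (flip s) = is_bit s.
Proof. by case: (flip_cases s) => [[-> ->]|[-> ->]|[_ ->]]; rewrite /is_bit ?eqxx ?orbT. Qed.

Lemma flipK : involutive flip.
Proof.
move=> s; case: (flip_cases s) => [[-> ->]|[-> ->]|[_ h]]; last by rewrite !h.
- by rewrite /flip eq_sym bit0_neq1 eqxx.
- by rewrite flip0.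
Qed.

(** * The automaton [tau] *)

Definition toggle (c : point Sigma -> nat -> bool) (x : point Sigma) : point Sigma :=
  fun i => if c x i then flip (x i) else x i.

Section Toggle.
Variable c : point Sigma -> nat -> bool.

Lemma is_lamp_toggle x i : is_lamp (toggle c x i) = is_lamp (x i).
Proof. by rewrite /toggle; case: ifP; rewrite ?is_lamp_flip. Qed.

Lemma is_bit_toggle x i : is_bit (toggle c x i) = is_bit (x i).
Proof. by rewrite /toggle; case: ifP; rewrite ?is_bit_flip. Qed.

Lemma toggle_id x i : ~~ c x i -> toggle c x i = x i.
Proof. by rewrite /toggle => /negbTE ->. Qed.

Lemma toggleK : (forall x i, c (toggle c x) i = c x i) -> involutive (toggle c).
Proof.
move=> hc x; apply: functional_extensionality => i.
by rewrite {1}/toggle hc /toggle; case: (c x i); rewrite ?flipK.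
Qed.

End Toggle.

(* On blocks (lamp, b1, b2), [toggle1] flips [b2] when the next [b1] is 1 and
   [toggle2] flips [b1] when [b2] is 1; the lamp tests make both involutive. *)
Definition toggle1_at (x : point Sigma) i :=
  [&& is_bit (x i), is_lamp (x i.+1), ~~ is_lamp (x i.+3) & x i.+2 == bit1].
Definition toggle2_at (x : point Sigma) i :=
  [&& is_bit (x i), ~~ is_lamp (x i.+1), is_lamp (x i.+2) & x i.+1 == bit1].
Definition toggle1 := toggle toggle1_at.
Definition toggle2 := toggle toggle2_at.

Lemma toggle1K : involutive toggle1.
Proof.
apply: toggleK => x i; rewrite /toggle1_at is_bit_toggle !is_lamp_toggle.
case h: (is_lamp (x i.+3)); first by rewrite !andbF.
by rewrite toggle_id /toggle1_at ?h ?andbF.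
Qed.

Lemma toggle2K : involutive toggle2.
Proof.
apply: toggleK => x i; rewrite /toggle2_at is_bit_toggle !is_lamp_toggle.
case h: (is_lamp (x i.+2)); last by rewrite !andbF.
by rewrite toggle_id /toggle2_at ?h ?andbF.
Qed.

Definition tau : selfmap := toggle1 \o toggle2.
Definition tau_inv : selfmap := toggle2 \o toggle1.

Lemma tauK : cancel tau tau_inv.
Proof. by move=> x; rewrite /tau /tau_inv /= toggle1K toggle2K. Qed.
Lemma tau_invK : cancel tau_inv tau.
Proof. by move=> x; rewrite /tau /tau_inv /= toggle2K toggle1K. Qed.

Definition local_rule r (f : selfmap) :=
  forall (x y : point Sigma) i, (forall j, j <= r -> x (i + j) = y (i + j)) -> f x i = f y i.

Lemma local_rule_continuous r f : local_rule r f -> continuous f.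
Proof. by move=> hf x n; exists (n + r.+1) => y hxy i hi; apply: hf => j hj; apply: hxy; lia. Qed.

Lemma local_rule_comp r s f g : local_rule r f -> local_rule s g -> local_rule (r + s) (f \o g).
Proof.
move=> hf hg x y i h; apply: hf => j hj; apply: hg => k hk.
by rewrite -addnA; apply: h; lia.
Qed.

Lemma isAut_local_rule r s f g : local_rule r f -> local_rule s g ->
  (forall x, f (shift x) = shift (f x)) -> cancel f g -> cancel g f -> isAut f.
Proof.
move=> hf hg hsh hfg hgf; split=> //; first exact: local_rule_continuous hf.
by exists g; split=> //; exact: local_rule_continuous hg.
Qed.

Lemma toggle1_local : local_rule 3 toggle1.
Proof.
move=> x y i h; rewrite /toggle1 /toggle /toggle1_at.
by rewrite -[i]addn0 -!addnS !h.
Qed.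

Lemma toggle2_local : local_rule 2 toggle2.
Proof.
move=> x y i h; rewrite /toggle2 /toggle /toggle2_at.
by rewrite -[i]addn0 -!addnS !h.
Qed.

Lemma tau_shift x : tau (shift x) = shift (tau x).
Proof.
rewrite /tau /=; have -> : toggle2 (shift x) = shift (toggle2 x).
  exact: functional_extensionality.
exact: functional_extensionality.
Qed.

Lemma isAut_tau : isAut tau.
Proof.
apply: isAut_local_rule tau_shift tauK tau_invK.
- exact: local_rule_comp toggle1_local toggle2_local.
- exact: local_rule_comp toggle2_local toggle1_local.
Qed.

(** * Tame maps *)

Definition shape_local (f : selfmap) :=
  forall x y i, same_shape x y -> x i = y i -> f x i = f y i.
Definition lamp_preserving (f : selfmap) := forall x i, is_lamp (f x i) = is_lamp (x i).
Definition shape_compatible (f : selfmap) :=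
  forall x y, same_shape x y -> same_shape (f x) (f y).

Lemma shape_compatible_local f : shape_local f -> lamp_preserving f -> shape_compatible f.
Proof.
move=> hl hp x y h j.
case hx: (is_lamp (x j)).
- have hy : is_lamp (y j) by rewrite -(shape_is_lamp (h j)).
  by rewrite /shape !hp hx hy.
- by rewrite (hl x y j h (shape_nonlamp_eq (h j) hx)).
Qed.

Lemma shape_local_comp f g :
  shape_local f -> shape_local g -> lamp_preserving g -> shape_local (f \o g).
Proof.
move=> hf hg hpg x y i h hi /=; apply: hf (hg _ _ _ h hi).
exact: shape_compatible_local.
Qed.

Lemma lamp_preserving_comp f g :
  lamp_preserving f -> lamp_preserving g -> lamp_preserving (f \o g).
Proof. by move=> hf hg x i /=; rewrite hf hg. Qed.

Lemma toggle1_shape_local : shape_local toggle1.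
Proof.
move=> x y i h hi; rewrite /toggle1 /toggle /toggle1_at hi.
rewrite (shape_is_lamp (h i.+1)) (shape_is_lamp (h i.+3)).
by rewrite (shape_eq_nonlamp (h i.+2) bit1_nonlamp).
Qed.

Lemma toggle2_shape_local : shape_local toggle2.
Proof.
move=> x y i h hi; rewrite /toggle2 /toggle /toggle2_at hi.
rewrite (shape_is_lamp (h i.+1)) (shape_is_lamp (h i.+2)).
by rewrite (shape_eq_nonlamp (h i.+1) bit1_nonlamp).
Qed.

Lemma tau_shape_local : shape_local tau.
Proof. exact: shape_local_comp toggle1_shape_local toggle2_shape_local (is_lamp_toggle _). Qed.

Lemma tau_inv_shape_local : shape_local tau_inv.
Proof. exact: shape_local_comp toggle2_shape_local toggle1_shape_local (is_lamp_toggle _). Qed.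

Lemma tau_lamp_preserving : lamp_preserving tau.
Proof. exact: lamp_preserving_comp (is_lamp_toggle _) (is_lamp_toggle _). Qed.

Lemma tau_inv_lamp_preserving : lamp_preserving tau_inv.
Proof. exact: lamp_preserving_comp (is_lamp_toggle _) (is_lamp_toggle _). Qed.

Lemma iter_shape_compatible f n : shape_compatible f -> shape_compatible (iter n f).
Proof. by move=> hf; elim: n => [|n IH] x y h //=; apply/hf/IH. Qed.

Definition tau_pow n m x := iter n tau (iter m tau_inv x).

Lemma tau_pow_shape_compatible n m : shape_compatible (tau_pow n m).
Proof.
move=> x y h; apply/iter_shape_compatible/iter_shape_compatible => //.
- exact: shape_compatible_local tau_shape_local tau_lamp_preserving.
- exact: shape_compatible_local tau_inv_shape_local tau_inv_lamp_preserving.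
Qed.

Lemma tau_pow_comp n m n' m' x : tau_pow n m (tau_pow n' m' x) = tau_pow (n + n') (m + m') x.
Proof.
have comm k y : iter k tau_inv (tau y) = tau (iter k tau_inv y).
  by elim: k => [|k IH] //=; rewrite IH tau_invK tauK.
have commn y : iter m tau_inv (iter n' tau y) = iter n' tau (iter m tau_inv y).
  by elim: n' => [|k IH] //=; rewrite comm IH.
by rewrite /tau_pow commn !iterD.
Qed.

Lemma tau_pow_cancel n : tau_pow n n =1 id.
Proof.
move=> x; rewrite /tau_pow; elim: n x => [|n IH] x //.
by rewrite iterSr iterS tau_invK IH.
Qed.

Definition shape_action (f : selfmap) n m := forall x, same_shape (f x) (tau_pow n m x).

(* Tame maps form a group containing the generators; on shapes they act through
   the abelian group generated by [tau]. *)
Definition tame (f : selfmap) :=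
  [/\ shape_local f, lamp_preserving f & exists n m, shape_action f n m].

Lemma shape_action_comp f g nf mf ng mg : shape_action f nf mf -> shape_action g ng mg ->
  shape_action (f \o g) (nf + ng) (mf + mg).
Proof.
move=> hf hg x /=; rewrite -tau_pow_comp.
exact: same_shape_trans (hf (g x)) (tau_pow_shape_compatible nf mf (hg x)).
Qed.

Lemma shape_action_inv f g n m : shape_action f n m -> cancel g f -> shape_action g m n.
Proof.
move=> hf hgf x; have h := hf (g x); rewrite hgf in h.
have := tau_pow_shape_compatible m n (same_shape_sym h).
by rewrite tau_pow_comp addnC tau_pow_cancel.
Qed.

Lemma tame_id : tame id.
Proof. by split=> //; exists 0, 0. Qed.

Lemma tame_tau : tame tau.
Proof. by split; [exact: tau_shape_local|exact: tau_lamp_preserving|exists 1, 0]. Qed.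

Lemma tame_comp f g : tame f -> tame g -> tame (f \o g).
Proof.
case=> hlf hpf [nf [mf hf]] [hlg hpg [ng [mg hg]]]; split.
- exact: shape_local_comp.
- exact: lamp_preserving_comp.
- by exists (nf + ng), (mf + mg); exact: shape_action_comp.
Qed.

Definition upd (y : point Sigma) i s : point Sigma := fun j => if j == i then s else y j.

(* Replacing the [i]-th coordinate of [g y] by that of [g x] does not change its
   image under [f], so by injectivity of [f] the two coordinates agree. *)
Lemma shape_local_inv f g : shape_local f -> shape_compatible g ->
  cancel f g -> cancel g f -> shape_local g.
Proof.
move=> hl hgc hfg hgf x y i h hi; set u := g x; set v := g y.
have huv : same_shape u v by exact: hgc.
set v' := upd v i (u i).
have hv'u : same_shape v' u by move=> j; rewrite /v' /upd; case: eqP => [->|] //; rewrite huv.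
have hfv' : f v' = f v.
  apply: functional_extensionality => j.
  have [->|hj] := eqVneq j i.
  - by rewrite (hl v' u i hv'u) /v' /upd ?eqxx // /u /v !hgf.
  - by apply: hl; [move=> k; rewrite /v' /upd; case: eqP => [->|]|rewrite /v' /upd (negbTE hj)].
have : v' = v by rewrite -(hfg v') hfv' hfg.
by move=> <-; rewrite /v' /upd eqxx.
Qed.

Lemma tame_inv f g : tame f -> cancel f g -> cancel g f -> tame g.
Proof.
case=> hl hp [n [m hf]] hfg hgf.
have hg : shape_action g m n by exact: shape_action_inv hgf.
have hgc : shape_compatible g.
  move=> x y h; apply: same_shape_trans (hg x) _.
  exact: same_shape_trans (tau_pow_shape_compatible m n h) (same_shape_sym (hg y)).
split; last by exists m, n.
- exact: shape_local_inv hgf.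
- by move=> x i; rewrite -[in RHS](hgf x) hp.
Qed.

Section ShapeTrivial.
Variables c c' : selfmap.
Hypotheses (tame_c : tame c) (cK : cancel c c') (c_shape : forall x, same_shape (c x) x).

Lemma same_shape_iter x k : same_shape (iter k c x) x.
Proof. by elim: k => [|k IH] //=; apply: same_shape_trans (c_shape _) IH. Qed.

(* Since [c] fixes all shapes, its action on a lamp coordinate only depends on
   the lamp sitting there: it is a permutation of the lamp symbols. *)
Lemma lamp_coord_perm x i : is_lamp (x i) ->
  exists p : {perm Sigma}, forall k, iter k c x i = (p ^+ k)%g (x i).
Proof.
case: tame_c => hl hp _ hxi.
pose pi v := if is_lamp v then c (upd x i v) i else v.
have upd_shape v w : is_lamp v -> is_lamp w -> same_shape (upd x i v) (upd x i w).
  by move=> hv hw j; rewrite /upd; case: eqP => // _; rewrite /shape hv hw.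
have pi_inj : injective pi.
  move=> v w; rewrite /pi.
  case hv: (is_lamp v); case hw: (is_lamp w) => h //.
  - have : c (upd x i v) = c (upd x i w).
      apply: functional_extensionality => j.
      have [->|hj] := eqVneq j i; first exact: h.
      by apply: hl; [exact: upd_shape|rewrite /upd (negbTE hj)].
    move=> /(congr1 c'); rewrite !cK => /(congr1 (fun y => y i)).
    by rewrite /upd eqxx.
  - by move: (hp (upd x i v) i); rewrite h /upd eqxx hv hw.
  - by move: (hp (upd x i w) i); rewrite -h /upd eqxx hv hw.
exists (perm pi_inj) => k; rewrite permX; elim: k => [|k IH] //=.
have hk : is_lamp (iter k c x i) by rewrite (shape_is_lamp (same_shape_iter x k i)).
rewrite -IH permE /pi hk; apply: hl; last by rewrite /upd eqxx.
move=> j; rewrite /upd; case: eqP => [->|_]; last exact: same_shape_iter.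
by rewrite /shape hk.
Qed.

Lemma iter_card_perm_shape_trivial x : iter #|{perm Sigma}| c x = x.
Proof.
apply: functional_extensionality => i.
case hxi: (is_lamp (x i)); last exact: same_shape_nonlamp (same_shape_iter _ _) hxi.
have [p ->] := lamp_coord_perm hxi.
by rewrite -cardsT expg_cardG ?in_setT ?perm1.
Qed.

End ShapeTrivial.

(** * Lamp maps *)

Definition suffix (x : point Sigma) i : point Sigma := fun j => x (i + j).
Definition shape_invariant (U : point Sigma -> bool) :=
  forall x y, same_shape x y -> U x = U y.
Definition lamp_stable (a : Sigma -> Sigma) := forall s, is_lamp s -> is_lamp (a s).
Definition lamp_bij (a a' : Sigma -> Sigma) :=
  [/\ lamp_stable a, lamp_stable a', (forall s, is_lamp s -> a' (a s) = s)
    & (forall s, is_lamp s -> a (a' s) = s)].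

Definition lamp (U : point Sigma -> bool) (a : Sigma -> Sigma) : selfmap :=
  fun x i => if is_lamp (x i) && U (suffix x i) then a (x i) else x i.

Lemma lamp_stable_comp a b : lamp_stable a -> lamp_stable b -> lamp_stable (a \o b).
Proof. by move=> ha hb s hs /=; apply/ha/hb. Qed.

Lemma lamp_bij_sym a a' : lamp_bij a a' -> lamp_bij a' a.
Proof. by case. Qed.

Lemma lamp_bij_comp a a' b b' : lamp_bij a a' -> lamp_bij b b' -> lamp_bij (a \o b) (b' \o a').
Proof.
case=> ha ha' haa' ha'a [hb hb' hbb' hb'b]; split; try exact: lamp_stable_comp.
- by move=> s hs /=; rewrite haa' ?hbb' //; exact: hb.
- by move=> s hs /=; rewrite hb'b ?ha'a //; exact: ha'.
Qed.

Lemma same_shape_suffix x y i : same_shape x y -> same_shape (suffix x i) (suffix y i).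
Proof. by move=> h j; exact: h. Qed.

Section Lamp.
Variable U : point Sigma -> bool.
Hypothesis U_shape : shape_invariant U.

Lemma lamp_nonlamp a x i : is_lamp (x i) = false -> lamp U a x i = x i.
Proof. by rewrite /lamp => ->. Qed.

Lemma lamp_lamp_preserving a : lamp_stable a -> lamp_preserving (lamp U a).
Proof.
by move=> ha x i; rewrite /lamp; case h: (is_lamp (x i)) => //=; case: (U _); rewrite ?ha.
Qed.

Lemma lamp_same_shape a x : lamp_stable a -> same_shape (lamp U a x) x.
Proof.
move=> ha j; case h: (is_lamp (x j)); last by rewrite lamp_nonlamp.
by rewrite /shape (lamp_lamp_preserving ha) h.
Qed.

Lemma lamp_at a x y i : same_shape y x ->
  lamp U a y i = if is_lamp (y i) && U (suffix x i) then a (y i) else y i.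
Proof. by move=> h; rewrite /lamp (U_shape (same_shape_suffix i h)). Qed.

Lemma tame_lamp a : lamp_stable a -> tame (lamp U a).
Proof.
move=> ha; split; last by exists 0, 0 => x; exact: lamp_same_shape.
- by move=> x y i h hi; rewrite (lamp_at _ _ h) /lamp hi.
- exact: lamp_lamp_preserving.
Qed.

Lemma eq_lamp a b : {in is_lamp, a =1 b} -> lamp U a = lamp U b.
Proof.
move=> h; apply: functional_extensionality => x; apply: functional_extensionality => i.
by rewrite /lamp; case h1: (is_lamp (x i)) => //=; case: (U _) => //; exact: h.
Qed.

Lemma lamp_comp a b x : lamp_stable b -> lamp U a (lamp U b x) = lamp U (a \o b) x.
Proof.
move=> hb; apply: functional_extensionality => i.
rewrite (lamp_at _ _ (lamp_same_shape x hb)) /lamp.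
by case hx: (is_lamp (x i)); case: (U _); rewrite /= ?hx ?hb.
Qed.

Lemma lamp_id a x : {in is_lamp, a =1 id} -> lamp U a x = x.
Proof.
move=> h; apply: functional_extensionality => i; rewrite /lamp.
by case hx: (is_lamp (x i)) => //=; case: (U _) => //; rewrite h.
Qed.

Lemma lampK a a' : lamp_bij a a' -> cancel (lamp U a) (lamp U a').
Proof. by case=> ha _ haa' _ x; rewrite lamp_comp //; apply: lamp_id => s /haa'. Qed.

End Lamp.

Lemma lamp_swap U V a b x : shape_invariant U -> shape_invariant V ->
  (forall z, U z -> V z -> False) -> lamp_stable a -> lamp_stable b ->
  lamp U a (lamp V b x) = lamp V b (lamp U a x).
Proof.
move=> hU hV hUV ha hb; apply: functional_extensionality => i.
rewrite (lamp_at hU _ _ (lamp_same_shape _ _ hb)) (lamp_at hV _ _ (lamp_same_shape _ _ ha)) /lamp.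
case hx: (is_lamp (x i)); case hu: (U _); case hv: (V _); rewrite /= ?hx ?andbT ?andbF //.
all: first [by case: (hUV _ hu hv) | by rewrite (hb _ hx) | by rewrite (ha _ hx)].
Qed.

Lemma lamp_commutator U V a a' b b' x : shape_invariant U -> shape_invariant V ->
  lamp_bij a a' -> lamp_bij b b' ->
  lamp U a' (lamp V b' (lamp U a (lamp V b x))) =
  lamp (fun z => U z && V z) (a' \o b' \o a \o b) x.
Proof.
move=> hU hV [ha ha' haa' _] [hb hb' hbb' _]; apply: functional_extensionality => i.
have s1 := lamp_same_shape V x hb.
have s2 := same_shape_trans (lamp_same_shape U _ ha) s1.
have s3 := same_shape_trans (lamp_same_shape V _ hb') s2.
rewrite (lamp_at hU _ _ s3) (lamp_at hV _ _ s2) (lamp_at hU _ _ s1).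
rewrite (lamp_at hV _ _ (same_shape_refl x)).
rewrite /lamp; case hx: (is_lamp (x i)); case hu: (U _); case hv: (V _);
  rewrite /= ?hx ?andbT ?andbF //.
all: first [ by rewrite (ha _ hx) haa' | by rewrite (hb _ hx) hbb'
           | by have h1 := hb _ hx; have h2 := ha _ h1; rewrite h1 h2 (hb' _ h2) ].
Qed.

Lemma toggle_lamp (c : point Sigma -> nat -> bool) x i :
  (forall y j, c y j -> is_bit (y j)) -> is_lamp (x i) -> toggle c x i = x i.
Proof. by move=> hc hx; apply: toggle_id; apply: contraTN hx => /hc /is_bit_nonlamp. Qed.

Lemma toggle1_lamp x i : is_lamp (x i) -> toggle1 x i = x i.
Proof. by apply: toggle_lamp => y j /and4P []. Qed.

Lemma toggle2_lamp x i : is_lamp (x i) -> toggle2 x i = x i.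
Proof. by apply: toggle_lamp => y j /and4P []. Qed.

Lemma tau_lamp x i : is_lamp (x i) -> tau x i = x i.
Proof. by move=> h; rewrite /tau /= toggle1_lamp (toggle2_lamp h). Qed.

Lemma tau_inv_lamp x i : is_lamp (x i) -> tau_inv x i = x i.
Proof. by move=> h; rewrite /tau_inv /= toggle2_lamp (toggle1_lamp h). Qed.

Lemma tau_inv_suffix x i : suffix (tau_inv x) i = tau_inv (suffix x i).
Proof.
have toggle_suffix (c : point Sigma -> nat -> bool) (y : point Sigma) :
    (forall j, c (suffix y i) j = c y (i + j)) -> suffix (toggle c y) i = toggle c (suffix y i).
  by move=> hc; apply: functional_extensionality => j; rewrite /suffix /toggle hc.
have t1 y : suffix (toggle1 y) i = toggle1 (suffix y i).
  by apply: toggle_suffix => j; rewrite /toggle1_at /suffix !addnS.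
have t2 y : suffix (toggle2 y) i = toggle2 (suffix y i).
  by apply: toggle_suffix => j; rewrite /toggle2_at /suffix !addnS.
by rewrite /tau_inv /= t2 t1.
Qed.

Lemma lamp_conj U a x : shape_invariant U -> lamp_stable a ->
  tau (lamp U a (tau_inv x)) = lamp (U \o tau_inv) a x.
Proof.
move=> hU ha; apply: functional_extensionality => i.
have hy := lamp_same_shape U (tau_inv x) ha.
case hx: (is_lamp (x i)).
- have hPt : is_lamp (tau_inv x i) by rewrite tau_inv_lamp_preserving.
  rewrite tau_lamp; last by rewrite lamp_lamp_preserving.
  by rewrite /lamp hPt hx /= tau_inv_suffix tau_inv_lamp.
- rewrite lamp_nonlamp // (tau_shape_local hy) ?tau_invK // lamp_nonlamp //.
  by rewrite tau_inv_lamp_preserving.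
Qed.

Lemma lamp_shift U a x : lamp U a (shift x) = shift (lamp U a x).
Proof.
apply: functional_extensionality => i; rewrite /lamp /shift.
suff -> : suffix (fun i => x i.+1) i = suffix x i.+1 by [].
by apply: functional_extensionality => j; rewrite /suffix addSn.
Qed.

Lemma isAut_lamp U a a' : shape_invariant U -> (forall x y, agree 3 x y -> U x = U y) ->
  lamp_bij a a' -> isAut (lamp U a).
Proof.
move=> hUs hU hab; have local b : local_rule 2 (lamp U b).
  move=> x y i h; have h0 := h 0 isT; rewrite addn0 in h0.
  by rewrite /lamp h0 (hU (suffix x i) (suffix y i)) // => j hj; apply: h; lia.
apply: isAut_local_rule (local a) (local a') (lamp_shift U a) _ _.
- exact: (lampK hUs hab).
- exact: (lampK hUs (lamp_bij_sym hab)).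
Qed.

(** * 3-cycles of the lamps *)

Definition perm_lamps (p : nat -> nat) s := if is_lamp s then sym (p (sym_index s)) else s.

Definition small_map (p : nat -> nat) := forall m, m < 5 -> p m < 5.

Lemma sym_index_perm_lamps p s : small_map p -> is_lamp s ->
  sym_index (perm_lamps p s) = p (sym_index s).
Proof. by rewrite /perm_lamps => hp hs; rewrite hs sym_indexK //; have := hp _ hs; lia. Qed.

Lemma lamp_stable_perm_lamps p : small_map p -> lamp_stable (perm_lamps p).
Proof. by move=> hp s hs; rewrite /is_lamp sym_index_perm_lamps // hp. Qed.

Lemma perm_lamps_comp p q s : small_map p -> is_lamp s ->
  perm_lamps q (perm_lamps p s) = perm_lamps (q \o p) s.
Proof.
move=> hp hs; rewrite {1}/perm_lamps lamp_stable_perm_lamps // sym_index_perm_lamps //.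
by rewrite /perm_lamps hs.
Qed.

Lemma lamp_bij_perm_lamps p q : small_map p -> small_map q ->
  (forall m, m < 5 -> q (p m) = m) -> (forall m, m < 5 -> p (q m) = m) ->
  lamp_bij (perm_lamps p) (perm_lamps q).
Proof.
move=> hp hq hqp hpq; split; try exact: lamp_stable_perm_lamps.
- by move=> s hs; rewrite perm_lamps_comp // /perm_lamps hs /= hqp // symK.
- by move=> s hs; rewrite perm_lamps_comp // /perm_lamps hs /= hpq // symK.
Qed.

Definition three_cycles : seq (nat * nat * nat) :=
  [:: (0,1,2); (0,1,3); (0,1,4); (0,2,1); (0,2,3); (0,2,4); (0,3,1); (0,3,2); (0,3,4); (0,4,1);
      (0,4,2); (0,4,3); (1,2,3); (1,2,4); (1,3,2); (1,3,4); (1,4,2); (1,4,3); (2,3,4); (2,4,3)].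

Definition cycle3 k m :=
  let: (a, b, c) := nth (0,1,2) three_cycles k in
  if m == a then b else if m == b then c else if m == c then a else m.
Definition cycle3_inv k m :=
  let: (a, b, c) := nth (0,1,2) three_cycles k in
  if m == a then c else if m == c then b else if m == b then a else m.

Lemma cycle3_small : all (fun k => all (fun m => (cycle3 k m < 5) && (cycle3_inv k m < 5))
  (iota 0 5)) (iota 0 20).
Proof. by []. Qed.

Lemma cycle3K : all (fun k => all (fun m =>
  (cycle3_inv k (cycle3 k m) == m) && (cycle3 k (cycle3_inv k m) == m)) (iota 0 5)) (iota 0 20).
Proof. by []. Qed.

(* Entry [k] is a pair [(k1, k2)] such that [cycle3 k] is the commutator of
   [cycle3 k1] and [cycle3 k2]: the alternating group A5 is perfect. *)
Definition commutator_table : seq (nat * nat) :=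
  [:: (4,13); (3,11); (3,8); (1,16); (0,11); (0,8); (0,17); (1,10); (1,5); (0,15);
      (2,7); (2,4); (1,18); (2,19); (0,19); (2,18); (0,18); (1,19); (5,15); (4,17)].

Lemma commutator_table_ok : all (fun k =>
  let: (k1, k2) := nth (0,0) commutator_table k in
  [&& k1 < 20, k2 < 20 & all (fun m =>
    cycle3 k m == cycle3_inv k1 (cycle3_inv k2 (cycle3 k1 (cycle3 k2 m)))) (iota 0 5)])
  (iota 0 20).
Proof. by []. Qed.

Definition cyc k := perm_lamps (cycle3 k).
Definition cyc_inv k := perm_lamps (cycle3_inv k).

Lemma small_cycle3 k : k < 20 -> small_map (cycle3 k).
Proof. by move=> hk m hm; have /andP [] := all_iota_lt (all_iota_lt cycle3_small hk) hm. Qed.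

Lemma small_cycle3_inv k : k < 20 -> small_map (cycle3_inv k).
Proof. by move=> hk m hm; have /andP [] := all_iota_lt (all_iota_lt cycle3_small hk) hm. Qed.

Lemma lamp_stable_cyc k : k < 20 -> lamp_stable (cyc k).
Proof. by move=> hk; apply/lamp_stable_perm_lamps/small_cycle3. Qed.

Lemma lamp_bij_cyc k : k < 20 -> lamp_bij (cyc k) (cyc_inv k).
Proof.
move=> hk; apply: lamp_bij_perm_lamps; [exact: small_cycle3|exact: small_cycle3_inv|..].
all: by move=> m hm; have /andP [/eqP ? /eqP ?] := all_iota_lt (all_iota_lt cycle3K hk) hm.
Qed.

Lemma cyc_commutator k : k < 20 -> exists k1 k2, [/\ k1 < 20, k2 < 20 &
  {in is_lamp, cyc k =1 cyc_inv k1 \o cyc_inv k2 \o cyc k1 \o cyc k2}].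
Proof.
move=> hk; have := all_iota_lt commutator_table_ok hk.
case: (nth (0,0) commutator_table k) => k1 k2 /and3P [h1 h2 /all_iota_lt hc].
exists k1, k2; split=> // s hs; have {}hs : is_lamp s := hs.
have idx p t : small_map p -> is_lamp t ->
    is_lamp (perm_lamps p t) /\ sym_index (perm_lamps p t) = p (sym_index t).
  by move=> hp ht; split; [exact: lamp_stable_perm_lamps|exact: sym_index_perm_lamps].
have [l2 e2] := idx _ _ (small_cycle3 h2) hs.
have [l1 e1] := idx _ _ (small_cycle3 h1) l2.
have [l2' e2'] := idx _ _ (small_cycle3_inv h2) l1.
rewrite /= /cyc /cyc_inv; set t := perm_lamps (cycle3_inv k2) _.
by rewrite {1}/perm_lamps {1}/perm_lamps hs l2' e2' e1 e2 (eqP (hc _ hs)).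
Qed.

Lemma cyc0_sym0 : cyc 0 (sym 0) = sym 1.
Proof. by rewrite /cyc /perm_lamps is_lamp_sym // sym_indexK //; lia. Qed.

(** * Marker contexts *)

Definition zero_block (x : point Sigma) := (x 1 == bit0) && (x 2 == bit0).

Lemma zero_block_shape_invariant : shape_invariant zero_block.
Proof.
move=> x y h; rewrite /zero_block.
by rewrite (shape_eq_nonlamp (h 1) bit0_nonlamp) (shape_eq_nonlamp (h 2) bit0_nonlamp).
Qed.

Lemma zero_block_local x y : agree 3 x y -> zero_block x = zero_block y.
Proof. by move=> h; rewrite /zero_block !h. Qed.

Lemma shape_invariant_tau_inv U : shape_invariant U -> shape_invariant (U \o tau_inv).
Proof.
move=> hU x y h; apply: hU.
exact: shape_compatible_local tau_inv_shape_local tau_inv_lamp_preserving _ _ h.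
Qed.

(* On points in block form, [marker_at i] says that the marker bit 1 is in
   block [i]: [tau_inv] moves it one block to the front. *)
Fixpoint marker_at i : point Sigma -> bool :=
  if i is i'.+1 then fun z => zero_block z && marker_at i' (tau_inv z)
  else fun z => ~~ zero_block z.

Lemma marker_at_shape_invariant i : shape_invariant (marker_at i).
Proof.
elim: i => [|i IH] x y h /=; first by rewrite (zero_block_shape_invariant h).
by rewrite (zero_block_shape_invariant h); congr (_ && _); exact: shape_invariant_tau_inv IH _ _ h.
Qed.

Lemma marker_atP i z : marker_at i z ->
  (forall k, k < i -> zero_block (iter k tau_inv z)) /\ ~~ zero_block (iter i tau_inv z).
Proof.
elim: i z => [|i IH] z /=; first by move=> h; split.
case/andP=> hz /IH [h1 h2]; split; last by rewrite -iterS iterSr.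
by case=> [|k] hk //; rewrite iterSr; apply: h1.
Qed.

Lemma marker_at_inj i j z : marker_at i z -> marker_at j z -> i = j.
Proof.
move=> /marker_atP [hi1 hi2] /marker_atP [hj1 hj2].
have [hlt|hge] := ltnP i j; first by rewrite hj1 in hi2.
have [hlt'|hge'] := ltnP j i; first by rewrite hi1 in hj2.
lia.
Qed.

Definition block_form (x : point Sigma) :=
  forall g, [&& is_lamp (x (3 * g)), is_bit (x (3 * g + 1)) & is_bit (x (3 * g + 2))].

Definition marker_front (x : point Sigma) L :=
  [/\ block_form x, (forall g, g < L -> x (3 * g + 1) = bit0 /\ x (3 * g + 2) = bit0)
    & x (3 * L + 1) = bit1].

Lemma block_form_toggle c x : block_form x -> block_form (toggle c x).
Proof. by move=> h g; rewrite is_lamp_toggle !is_bit_toggle. Qed.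

Section BlockForm.
Variables (x : point Sigma) (g : nat).
Hypothesis x_blocks : block_form x.

Lemma toggle1_block1 : toggle1 x (3 * g + 1) = x (3 * g + 1).
Proof.
apply: toggle_id; have /and3P [_ _ h2] := x_blocks g.
rewrite /toggle1_at (_ : (3 * g + 1).+1 = 3 * g + 2); last lia.
by rewrite (negbTE (is_bit_nonlamp h2)) andbF.
Qed.

Lemma toggle1_block2 : toggle1 x (3 * g + 2) =
  if x (3 * g.+1 + 1) == bit1 then flip (x (3 * g + 2)) else x (3 * g + 2).
Proof.
have /and3P [_ _ h2] := x_blocks g; have /and3P [h3 _ h5] := x_blocks g.+1.
rewrite /toggle1 /toggle /toggle1_at (_ : (3 * g + 2).+1 = 3 * g.+1); last lia.
rewrite (_ : (3 * g.+1).+2 = 3 * g.+1 + 2); last lia.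
rewrite (_ : (3 * g.+1).+1 = 3 * g.+1 + 1); last lia.
by rewrite h2 h3 (is_bit_nonlamp h5).
Qed.

Lemma toggle2_block1 : toggle2 x (3 * g + 1) =
  if x (3 * g + 2) == bit1 then flip (x (3 * g + 1)) else x (3 * g + 1).
Proof.
have /and3P [_ h1 h2] := x_blocks g; have /and3P [h3 _ _] := x_blocks g.+1.
rewrite /toggle2 /toggle /toggle2_at (_ : (3 * g + 1).+1 = 3 * g + 2); last lia.
rewrite (_ : (3 * g + 2).+1 = 3 * g.+1); last lia.
by rewrite h1 h3 (is_bit_nonlamp h2).
Qed.

Lemma toggle2_block2 : toggle2 x (3 * g + 2) = x (3 * g + 2).
Proof.
apply: toggle_id; have /and3P [h3 _ _] := x_blocks g.+1.
by rewrite /toggle2_at (_ : (3 * g + 2).+1 = 3 * g.+1) ?h3 ?andbF //; lia.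
Qed.

End BlockForm.

Lemma marker_front_tau_inv x L : marker_front x L.+1 -> marker_front (tau_inv x) L.
Proof.
case=> hx hz h1.
have hx1 := block_form_toggle toggle1_at hx.
have E1 g : tau_inv x (3 * g + 1) =
    if toggle1 x (3 * g + 2) == bit1 then flip (x (3 * g + 1)) else x (3 * g + 1).
  by rewrite /tau_inv /= toggle2_block1 // toggle1_block1.
have E2 g : tau_inv x (3 * g + 2) = toggle1 x (3 * g + 2).
  by rewrite /tau_inv /= toggle2_block2.
split; first exact: block_form_toggle.
- move=> g hg; have [a1 a2] := hz g (ltn_trans hg (ltnSn _)); have [b1 _] := hz g.+1 hg.
  have hs : toggle1 x (3 * g + 2) = bit0 by rewrite toggle1_block2 // b1 a2 bit0_neq1.
  by rewrite E1 E2 hs bit0_neq1 a1.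
- have [a1 a2] := hz L (ltnSn _).
  have hs : toggle1 x (3 * L + 2) = bit1 by rewrite toggle1_block2 // h1 eqxx a2 flip0.
  by rewrite E1 hs eqxx a1 flip0.
Qed.

Lemma marker_front_marker_at L x : marker_front x L -> marker_at L x.
Proof.
elim: L x => [|L IH] x hf /=.
- by case: hf => _ _; rewrite muln0 add0n /zero_block => ->; rewrite eq_sym bit0_neq1.
- apply/andP; split; last exact/IH/marker_front_tau_inv.
  by case: hf => _ /(_ 0 isT); rewrite muln0 !add0n /zero_block => -[-> ->]; rewrite eqxx.
Qed.

Definition marker_point L : point Sigma :=
  fun j => if j %% 3 == 0 then sym 0 else if j == 3 * L + 1 then bit1 else bit0.

Lemma marker_point_front L : marker_front (marker_point L) L.
Proof.
have b0 : is_bit bit0 by rewrite /is_bit eqxx.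
have b1 : is_bit bit1 by rewrite /is_bit eqxx orbT.
have m0 g : (3 * g) %% 3 = 0 by lia.
have m1 g : (3 * g + 1) %% 3 = 1 by lia.
have m2 g : (3 * g + 2) %% 3 = 2 by lia.
split=> [g|g hg|]; rewrite /marker_point ?m0 ?m1 ?m2 /=.
- by rewrite is_lamp_sym //; apply/and3P; split=> //; case: ifP.
- by rewrite !ifF //; apply/eqP; lia.
- by rewrite eqxx.
Qed.

(** * The group [H] *)

Fixpoint generators n : seq selfmap :=
  if n is n'.+1 then lamp zero_block (cyc n') :: lamp (marker_at 0) (cyc n') :: generators n'
  else [:: tau].

Lemma generators_spec n f : List.In f (generators n) ->
  f = tau \/ exists2 k, k < n & f = lamp zero_block (cyc k) \/ f = lamp (marker_at 0) (cyc k).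
Proof.
elim: n => [|n IH] /=; first by case=> // <-; left.
case=> [<-|[<-|/IH [->|[k hk hf]]]]; [right; exists n..|left|right; exists k] => //; auto.
Qed.

Lemma isAut_generators f : List.In f (generators 20) -> isAut f.
Proof.
case/generators_spec => [->|[k hk [->|->]]]; first exact: isAut_tau.
- apply: isAut_lamp zero_block_shape_invariant zero_block_local (lamp_bij_cyc hk).
- apply: isAut_lamp (marker_at_shape_invariant 0) _ (lamp_bij_cyc hk).
  by move=> x y /zero_block_local /= ->.
Qed.

Lemma tame_generators f : List.In f (generators 20) -> tame f.
Proof.
case/generators_spec => [->|[k hk [->|->]]]; first exact: tame_tau.
- exact: tame_lamp zero_block_shape_invariant _ (lamp_stable_cyc hk).
- exact: tame_lamp (marker_at_shape_invariant 0) _ (lamp_stable_cyc hk).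
Qed.

Local Notation H := (fgen (generators 20)).

Lemma tame_H f : H f -> tame f.
Proof.
elim=> {f} [|f /tame_generators //|f g _ hf _ hg|f g _ hf h1 h2].
- exact: tame_id.
- exact: tame_comp.
- exact: tame_inv hf h1 h2.
Qed.

Lemma H_bijective f : H f -> exists g, cancel f g /\ cancel g f.
Proof.
elim=> {f} [|f hf|f g _ [f' [h1 h2]] _ [g' [h3 h4]]|f g _ _ h1 h2].
- by exists id.
- by case: (isAut_generators hf) => _ _ [g [_ h1 h2]]; exists g.
- by exists (g' \o f'); split=> x /=; [rewrite h1 h3|rewrite h4 h2].
- by exists f.
Qed.

Lemma H_tau : H tau.
Proof. by apply: gen_base; elim: 20 => [|n IH] /=; [left|right; right]. Qed.

Lemma H_tau_inv : H tau_inv.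
Proof. exact: gen_inv H_tau tauK tau_invK. Qed.

Definition lamps_in_H U := forall k, k < 20 -> H (lamp U (cyc k)).

Lemma H_lamp_cyc_inv U k : shape_invariant U -> k < 20 ->
  H (lamp U (cyc k)) -> H (lamp U (cyc_inv k)).
Proof.
move=> hU hk h; have hb := lamp_bij_cyc hk.
exact: gen_inv h (lampK hU hb) (lampK hU (lamp_bij_sym hb)).
Qed.

Lemma lamps_in_H_meet U V : shape_invariant U -> shape_invariant V ->
  lamps_in_H U -> lamps_in_H V -> lamps_in_H (fun z => U z && V z).
Proof.
move=> hU hV hLU hLV k hk.
have [k1 [k2 [h1 h2 hc]]] := cyc_commutator hk.
rewrite (eq_lamp _ hc).
have -> : lamp (fun z => U z && V z) (cyc_inv k1 \o cyc_inv k2 \o cyc k1 \o cyc k2) =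
    lamp U (cyc_inv k1) \o lamp V (cyc_inv k2) \o lamp U (cyc k1) \o lamp V (cyc k2).
  by apply: functional_extensionality => x /=; rewrite lamp_commutator //; exact: lamp_bij_cyc.
repeat apply: gen_comp.
- exact: H_lamp_cyc_inv hU h1 (hLU _ h1).
- exact: H_lamp_cyc_inv hV h2 (hLV _ h2).
- exact: hLU.
- exact: hLV.
Qed.

Lemma lamps_in_H_tau_inv U : shape_invariant U -> lamps_in_H U -> lamps_in_H (U \o tau_inv).
Proof.
move=> hU hL k hk.
have -> : lamp (U \o tau_inv) (cyc k) = tau \o lamp U (cyc k) \o tau_inv.
  by apply: functional_extensionality => x /=; rewrite lamp_conj //; exact: lamp_stable_cyc.
by apply: gen_comp; [apply: gen_comp; [exact: H_tau|exact: hL]|exact: H_tau_inv].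
Qed.

Lemma generators_lamp n k : k < n ->
  List.In (lamp zero_block (cyc k)) (generators n) /\
  List.In (lamp (marker_at 0) (cyc k)) (generators n).
Proof.
elim: n => [|n IH] // hk /=.
have [->|hne] := eqVneq k n; first by split; [left|right; left].
by have [] := IH (ltac:(lia) : k < n); split; right; right.
Qed.

Lemma lamps_in_H_marker_at i : lamps_in_H (marker_at i).
Proof.
elim: i => [|i IH] /=; first by move=> k hk; apply/gen_base; case: (generators_lamp hk).
apply: lamps_in_H_meet; [exact: zero_block_shape_invariant| |..].
- exact: shape_invariant_tau_inv (marker_at_shape_invariant i).
- by move=> k hk; apply/gen_base; case: (generators_lamp hk).
- exact: lamps_in_H_tau_inv (marker_at_shape_invariant i) IH.
Qed.

(** * [H] has no free subgroup *)

Lemma commutator_same_shape (a a' b b' : selfmap) :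
  tame a -> tame b -> cancel a' a -> cancel b' b ->
  forall x, same_shape ((a' \o b' \o a \o b) x) x.
Proof.
case=> _ _ [na [ma ta]] [_ _ [nb [mb tb]]] ha hb x.
have := shape_action_comp (shape_action_comp (shape_action_comp
  (shape_action_inv ta ha) (shape_action_inv tb hb)) ta) tb x.
by rewrite (_ : ma + mb + na + nb = na + nb + ma + mb) ?tau_pow_cancel //; lia.
Qed.

Fixpoint commutator_word n : seq letter :=
  if n is n'.+1 then [:: (false, true), (true, true), (false, false), (true, false)
    & commutator_word n'] else [::].

Lemma reduced_commutator_word n : reduced (commutator_word n).
Proof.
suff : reduced ((true, false) :: commutator_word n) by case: n.
by elim: n => [|n IH] //=.
Qed.

Lemma eval_commutator_word (a a' b b' : selfmap) n :
  eval_word a a' b b' (commutator_word n) =1 iter n (a' \o b' \o a \o b).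
Proof. by elim: n => [|n IH] x //=; rewrite IH. Qed.

Lemma H_no_free_subgroup : ~ contains_F2 H.
Proof.
case=> a [a' [b [b' [ha [hb [aK [a'K [bK [b'K hw]]]]]]]]].
have ta := tame_H ha; have tb := tame_H hb.
have tc : tame (a' \o b' \o a \o b).
  apply/tame_comp/tb/tame_comp/ta/tame_comp; [exact: tame_inv ta aK a'K|exact: tame_inv tb bK b'K].
have cK : cancel (a' \o b' \o a \o b) (b' \o a' \o b \o a) by move=> x; rewrite /= a'K b'K aK bK.
have hN : 0 < #|{perm Sigma}| by apply/card_gt0P; exists 1%g.
apply: (hw (commutator_word #|{perm Sigma}|)); [by case: #|_| hN|exact: reduced_commutator_word|].
apply: functional_extensionality => x; rewrite eval_commutator_word.
exact: (iter_card_perm_shape_trivial tc cK (commutator_same_shape ta tb a'K b'K)).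
Qed.

(** * [H] is not virtually solvable *)

Lemma finite_index_lamp_pair (K : selfmap -> Prop) (reps : seq selfmap) : is_subgroup K ->
  (forall r, List.In r reps -> H r) ->
  (forall h, H h -> exists r k, [/\ List.In r reps, K k & h = r \o k]) ->
  exists i j, i != j /\
    forall k, k < 20 -> K (lamp (marker_at i) (cyc_inv k) \o lamp (marker_at j) (cyc k)).
Proof.
case=> _ Kc Ki hrin hcov.
pose R i k p := exists2 kk, K kk & lamp (marker_at i) (cyc k) = List.nth p reps id \o kk.
have [|i [j [hij hR]]] := @pigeonhole_rows (List.length reps) 20 R.
  move=> i k hk; have [r [kk [hin hK e]]] := hcov _ (lamps_in_H_marker_at i hk).
  have [p [/ltP hp hr]] := List.In_nth reps r id hin.
  by exists p => //; exists kk; rewrite // hr.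
exists i, j; split=> // k hk.
have [p /ltP hp [[kk1 hK1 e1] [kk2 hK2 e2]]] := hR k hk.
set r := List.nth p reps id in e1 e2.
have [r' [rK _]] := H_bijective (hrin _ (List.nth_In reps id hp)).
have [bU bU'] := (lampK (marker_at_shape_invariant i) (lamp_bij_cyc hk),
  lampK (marker_at_shape_invariant i) (lamp_bij_sym (lamp_bij_cyc hk))).
have hinv : K (lamp (marker_at i) (cyc_inv k) \o r).
  apply: (Ki kk1) => // [x|y] /=.
  - by rewrite -[r (kk1 x)]/((r \o kk1) x) -e1 bU.
  - by apply: (can_inj rK); rewrite -/r -[r (kk1 _)]/((r \o kk1) _) -e1 bU'.
have -> : lamp (marker_at i) (cyc_inv k) \o lamp (marker_at j) (cyc k) =
    (lamp (marker_at i) (cyc_inv k) \o r) \o kk2 by rewrite e2.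
exact: Kc.
Qed.

Section LampPair.
Variables U V : point Sigma -> bool.
Hypotheses (U_shape : shape_invariant U) (V_shape : shape_invariant V).
Hypothesis UV_disjoint : forall z, U z -> V z -> False.

Definition lamp2 a b : selfmap := lamp U a \o lamp V b.

Lemma lamp2_comp a b a' b' : lamp_stable b -> lamp_stable a' -> lamp_stable b' ->
  lamp2 a b \o lamp2 a' b' = lamp2 (a \o a') (b \o b').
Proof.
move=> hb ha' hb'; apply: functional_extensionality => x; rewrite /lamp2 /=.
rewrite (@lamp_swap V U b a') // => [|z hV hU]; last exact: UV_disjoint hU hV.
by rewrite !lamp_comp.
Qed.

Lemma lamp2K a a' b b' : lamp_bij a a' -> lamp_bij b b' -> cancel (lamp2 a b) (lamp2 a' b').
Proof.
move=> [ha ha' haa' _] [hb hb' hbb' _] x.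
rewrite -[LHS]/((lamp2 a' b' \o lamp2 a b) x) lamp2_comp // /lamp2 /=.
by rewrite !lamp_id.
Qed.

Lemma lamp2_at a b w : V w -> is_lamp (w 0) -> lamp_stable b -> lamp2 a b w 0 = b (w 0).
Proof.
move=> hV hw hb; have hVw : V (suffix w 0) by [].
rewrite /lamp2 /= {1}/lamp (U_shape (same_shape_suffix 0 (lamp_same_shape V w hb))).
have -> : U (suffix w 0) = false by apply/negP => /UV_disjoint; apply.
by rewrite andbF /lamp hw hVw.
Qed.

(* Since [cyc k] is a commutator of two other 3-cycles, the commutator of two
   elements of the [n]-th derived subgroup produces the [(n+1)]-th level. *)
Lemma derived_lamp2 (K : selfmap -> Prop) :
  (forall k, k < 20 -> K (lamp2 (cyc_inv k) (cyc k))) ->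
  forall n k, k < 20 -> exists a a', lamp_bij a a' /\ derived K n (lamp2 a (cyc k)).
Proof.
move=> hK; elim=> [|n IH] k hk.
  by exists (cyc_inv k), (cyc k); split; [exact/lamp_bij_sym/lamp_bij_cyc|exact: hK].
have [k1 [k2 [h1 h2 hc]]] := cyc_commutator hk.
have [a1 [a1' [hb1 D1]]] := IH k1 h1; have [a2 [a2' [hb2 D2]]] := IH k2 h2.
have [sa1 sa1' _ _] := hb1; have [sa2 sa2' _ _] := hb2.
have [sc1 sc1' _ _] := lamp_bij_cyc h1; have [sc2 sc2' _ _] := lamp_bij_cyc h2.
have hb := lamp_bij_comp (lamp_bij_comp
  (lamp_bij_comp (lamp_bij_sym hb1) (lamp_bij_sym hb2)) hb1) hb2.
exists (a1' \o a2' \o a1 \o a2); eexists; split; first exact: hb.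
have -> : lamp2 (a1' \o a2' \o a1 \o a2) (cyc k) =
    lamp2 a1' (cyc_inv k1) \o lamp2 a2' (cyc_inv k2) \o lamp2 a1 (cyc k1) \o lamp2 a2 (cyc k2).
  rewrite (lamp2_comp _ sc1' sa2' sc2') (lamp2_comp _ (lamp_stable_comp sc1' sc2') sa1 sc1).
  rewrite (lamp2_comp _ (lamp_stable_comp (lamp_stable_comp sc1' sc2') sc1) sa2 sc2).
  by rewrite /lamp2 (eq_lamp _ hc).
have c1 := lamp_bij_cyc h1; have c2 := lamp_bij_cyc h2.
apply: gen_base.
exists (lamp2 a1 (cyc k1)), (lamp2 a1' (cyc_inv k1)), (lamp2 a2 (cyc k2)), (lamp2 a2' (cyc_inv k2)).
do ![split] => //.
- exact: (lamp2K hb1 c1).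
- exact: (lamp2K (lamp_bij_sym hb1) (lamp_bij_sym c1)).
- exact: (lamp2K hb2 c2).
- exact: (lamp2K (lamp_bij_sym hb2) (lamp_bij_sym c2)).
Qed.

End LampPair.

Lemma H_not_virt_solvable : ~ virt_solvable H.
Proof.
case=> K [hK _ [n hsol] [reps [hrin hcov]]].
have [i [j [hij hpair]]] := finite_index_lamp_pair hK hrin hcov.
have disj z : marker_at i z -> marker_at j z -> False.
  by move=> hi hj; move/eqP: hij; apply; exact: marker_at_inj hi hj.
have [a [_ [_ hD]]] := derived_lamp2 (marker_at_shape_invariant i)
  (marker_at_shape_invariant j) disj hpair n (isT : 0 < 20).
have hw : marker_at j (marker_point j) := marker_front_marker_at (marker_point_front j).
have hw0 : is_lamp (marker_point j 0) by rewrite /marker_point /= is_lamp_sym.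
have := congr1 (fun f : selfmap => f (marker_point j) 0) (hsol _ hD).
have hc0 := lamp_stable_cyc (isT : 0 < 20).
rewrite /= (lamp2_at (marker_at_shape_invariant i) disj _ hw hw0 hc0).
by rewrite /marker_point /= cyc0_sym0 => /eqP; rewrite eq_sym_small.
Qed.

End LampGroup.

Theorem mainTheorem12 (Sigma : finType) (hSigma : 8 <= #|Sigma|) :
  ~ Tits_alternative_Aut Sigma.
Proof.
move=> tits; have /card_gt0P [x0 _] : 0 < #|Sigma| by apply: leq_trans hSigma.
have [] := tits (generators x0 20) (isAut_generators hSigma).
- exact: H_not_virt_solvable hSigma.
- exact: H_no_free_subgroup hSigma.
Qed.
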